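(* Let $f:(0,\infty)\to(0,\infty)$ be non-increasing, let $a\ge0$, $b>0$, $c>0$, and define \[ F(r):=\int_0^\infty t^{-a}e^{-b^2t}e^{-\frac{r^2}{c^2t}}f(t)\,dt,\qquad r>0. \] If $t\mapsto t^2f(t)$ is non-decreasing, then \[ F(r)\asymp r^{-a+\frac12}\,f\!\left(\tfrac{r}{bc}\right)e^{-2bc^{-1}r}\quad\text{for all } r\ge1. \]
   Context: $g(r)\asymp h(r)$ for $r\in I$ means that $g(r)/h(r)$ stays between two positive constants (depending on $a,b,c,f$ but not on $r$) for all $r\in I$. *)

From Stdlib Require Import Reals.
Open Scope R_scope.

Definition improper_int_0_inf (g : R -> R) (l : R) : Prop :=
  (forall u v : R, 0 < u -> u <= v -> inhabited (Riemann_integrable g u v)) /\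
  (forall eps : R, 0 < eps ->
     exists d M : R, 0 < d /\ 0 < M /\
       forall (u v : R) (pr : Riemann_integrable g u v),
         0 < u -> u < d -> M < v -> Rabs (RiemannInt pr - l) < eps).

Definition integrand (f : R -> R) (a b c r : R) (t : R) : R :=
  Rpower t (- a) * exp (- (b ^ 2 * t)) * exp (- (r ^ 2 / (c ^ 2 * t))) * f t.

Definition comparison (f : R -> R) (a b c r : R) : R :=
  Rpower r (- a + 1 / 2) * f (r / (b * c)) * exp (- (2 * b / c * r)).

From Stdlib Require Import Reals Lra Psatz Classical.
From Coquelicot Require Import Coquelicot.

Open Scope R_scope.

(* Completing the square, the integrand is t^{-a} f(t) e^{-2br/c} times
   e^{-b^2 (t - t0)^2 / t} with t0 = r/(bc): a bump of width ~ sqrt t0 at t0.  These yield, for r >= 1, the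
   pointwise upper bound C t0^{-a} f(t0) e^{-2br/c} e^{-mu |t - t0| / sqrt t0}
   and a matching lower bound on [t0, t0 + kappa sqrt t0], hence
   F(r) ~ t0^{-a} sqrt t0 f(t0) e^{-2br/c}, which is the comparison function
   up to the factor (bc)^{1/2-a}. *)

Lemma exp_le_compat (x y : R) : x <= y -> exp x <= exp y.
Proof. intros [H | ->]; [left; apply exp_increasing; exact H | right; reflexivity]. Qed.

(* 2 / (X + 1/X) is the hyperbolic secant written in terms of X = e^x;
   it dominates 1/X as soon as X >= 1. *)
Lemma inv_le_sech (X : R) : 1 <= X -> / X <= 2 / (X + / X).
Proof.
intros hX.
assert (E : 2 / (X + / X) - / X = (X * X - 1) / (X * (X * X + 1)))
  by (field; split; nra).
assert (0 <= (X * X - 1) / (X * (X * X + 1))) by (apply Rdiv_le_0_compat; nra).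
lra.
Qed.

(* e^{-|x|} <= sech x: the two-sided exponential is dominated by a smooth
   function with the explicit primitive 2 atan(e^x). *)
Lemma exp_neg_abs_le_sech (x : R) : exp (- Rabs x) <= 2 / (exp x + exp (- x)).
Proof.
destruct (Rle_dec 0 x) as [Hx | Hx].
- rewrite Rabs_pos_eq, exp_Ropp by lra. apply inv_le_sech.
  rewrite <- exp_0. apply exp_le_compat. exact Hx.
- rewrite Rabs_left, Ropp_involutive by lra.
  replace (exp x) with (/ exp (- x)) by (rewrite exp_Ropp, Rinv_inv; reflexivity).
  rewrite Rplus_comm. apply inv_le_sech.
  rewrite <- exp_0. apply exp_le_compat. lra.
Qed.

Lemma is_RInt_sech (A lam t0 u v : R) : 0 < lam ->
  is_RInt (fun t => A * (2 / (exp (lam * (t - t0)) + exp (- (lam * (t - t0)))))) u v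
    (2 * A / lam * (atan (exp (lam * (v - t0))) - atan (exp (lam * (u - t0))))).
Proof.
intros hl.
replace (2 * A / lam * (atan (exp (lam * (v - t0))) - atan (exp (lam * (u - t0)))))
  with (minus (2 * A / lam * atan (exp (lam * (v - t0))))
              (2 * A / lam * atan (exp (lam * (u - t0)))))
  by (unfold minus, plus, opp; simpl; ring).
apply (is_RInt_derive (fun t => 2 * A / lam * atan (exp (lam * (t - t0))))).
- intros x _. auto_derive; [exact I |].
  unfold Rminus. rewrite exp_Ropp.
  assert (HE : 0 < exp (lam * (x + - t0))) by apply exp_pos.
  set (E := exp (lam * (x + - t0))) in *.
  field. split; [lra | split; [nra | lra]].
- intros y _.
  apply (ex_derive_continuous
           (fun t => A * (2 / (exp (lam * (t - t0)) + exp (- (lam * (t - t0))))))).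
  auto_derive.
  assert (0 < exp (lam * (y - t0))) by apply exp_pos.
  assert (0 < exp (- (lam * (y - t0)))) by apply exp_pos.
  unfold Rminus in *. lra.
Qed.

Lemma RInt_le_two_sided_exp (g : R -> R) (A lam t0 u v : R) :
  0 < lam -> 0 <= A -> u <= v -> ex_RInt g u v ->
  (forall t, u < t < v -> g t <= A * exp (- lam * Rabs (t - t0))) ->
  RInt g u v <= A * PI / lam.
Proof.
intros hl hA huv Hg Hdom.
set (sech := fun t => A * (2 / (exp (lam * (t - t0)) + exp (- (lam * (t - t0)))))).
assert (Hsech := is_RInt_sech A lam t0 u v hl).
apply Rle_trans with (RInt sech u v).
- apply RInt_le; [exact huv | exact Hg | eexists; exact Hsech |].
  intros t Ht. apply Rle_trans with (1 := Hdom t Ht). apply Rmult_le_compat_l; [exact hA |].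
  replace (- lam * Rabs (t - t0)) with (- Rabs (lam * (t - t0)))
    by (rewrite Rabs_mult, (Rabs_pos_eq lam) by lra; ring).
  apply exp_neg_abs_le_sech.
- unfold sech. rewrite (is_RInt_unique _ _ _ _ Hsech).
  destruct (atan_bound (exp (lam * (v - t0)))) as [_ Hv].
  assert (Hu : atan 0 < atan (exp (lam * (u - t0))))
    by (apply atan_increasing, exp_pos).
  rewrite atan_0 in Hu.
  replace (A * PI / lam) with (2 * A / lam * (PI / 2)) by (field; lra).
  apply Rmult_le_compat_l; [apply Rdiv_le_0_compat; lra | lra].
Qed.

Lemma RInt_nonneg_mono (g : R -> R) (u v u' v' : R) :
  (forall x y, u <= x -> x <= y -> y <= v -> ex_RInt g x y) ->
  (forall t, u < t < v -> 0 <= g t) ->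
  u <= u' -> u' <= v' -> v' <= v -> RInt g u' v' <= RInt g u v.
Proof.
intros Hex Hpos h1 h2 h3.
assert (Hsplit : RInt g u v = RInt g u u' + RInt g u' v' + RInt g v' v).
{ rewrite <- (RInt_Chasles g u v' v), <- (RInt_Chasles g u u' v');
    [reflexivity | apply Hex; lra ..]. }
assert (0 <= RInt g u u')
  by (apply RInt_ge_0; [lra | apply Hex; lra | intros x Hx; apply Hpos; lra]).
assert (0 <= RInt g v' v)
  by (apply RInt_ge_0; [lra | apply Hex; lra | intros x Hx; apply Hpos; lra]).
lra.
Qed.

(* A nonnegative function, integrable on compacts of (0,oo), whose integrals
   over [u,v] are bounded by U, has an improper integral F <= U over (0,oo);
   F is the supremum of these integrals. *)
Lemma improper_int_of_bounded (g : R -> R) (U : R) :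
  (forall u v, 0 < u -> u <= v -> Riemann_integrable g u v) ->
  (forall t, 0 < t -> 0 <= g t) ->
  (forall u v, 0 < u -> u <= v -> RInt g u v <= U) ->
  exists F, improper_int_0_inf g F /\ F <= U /\
    forall u v, 0 < u -> u <= v -> RInt g u v <= F.
Proof.
intros Hint Hpos Hbound.
set (S := fun y => exists u v, 0 < u /\ u <= v /\ y = RInt g u v).
assert (HS : forall u v, 0 < u -> u <= v -> S (RInt g u v))
  by (intros u v hu huv; exists u, v; auto).
assert (HSb : bound S) by (exists U; intros y (u & v & hu & huv & ->); auto).
destruct (completeness S HSb (ex_intro _ _ (HS 1 1 Rlt_0_1 (Rle_refl 1))))
  as [F [HF_ub HF_least]].
exists F. split; [split | split].
- intros u v hu huv. constructor. auto.
- intros eps heps.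
  assert (Hnear : exists y, S y /\ F - eps < y).
  { apply NNPP. intros Hno. assert (F <= F - eps); [| lra].
    apply HF_least. intros y Sy. apply Rnot_lt_le. intros Hy. apply Hno. eauto. }
  destruct Hnear as [y [(u1 & v1 & hu1 & huv1 & ->) Hlt]].
  exists u1, v1. split; [exact hu1 | split; [lra |]].
  intros u v pr hu hud hvM. rewrite <- (RInt_Reals g u v pr).
  assert (RInt g u1 v1 <= RInt g u v).
  { apply RInt_nonneg_mono; try lra.
    - intros x y hx hxy _. apply ex_RInt_Reals_1, Hint; lra.
    - intros t Ht. apply Hpos. lra. }
  assert (RInt g u v <= F) by (apply HF_ub, HS; lra).
  apply Rabs_def1; lra.
- apply HF_least. intros y (u & v & hu & huv & ->). auto.
- intros u v hu huv. apply HF_ub, HS; assumption.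
Qed.

Definition weight (a b c r t : R) : R :=
  Rpower t (- a) * exp (- (b ^ 2 * t)) * exp (- (r ^ 2 / (c ^ 2 * t))).

Lemma integrand_weight (f : R -> R) (a b c r t : R) :
  integrand f a b c r t = weight a b c r t * f t.
Proof. reflexivity. Qed.

Lemma weight_pos (a b c r t : R) : 0 < t -> 0 < weight a b c r t.
Proof. intros ht. unfold weight, Rpower. repeat apply Rmult_lt_0_compat; apply exp_pos. Qed.

Lemma weight_continuous (a b c r t : R) : 0 < c -> 0 < t -> continuity_pt (weight a b c r) t.
Proof.
intros hc ht. apply continuity_pt_filterlim.
apply (ex_derive_continuous (weight a b c r)). unfold weight, Rpower. auto_derive.
repeat split; try lra.
assert (0 < c * (c * 1) * t) by (apply Rmult_lt_0_compat; [nra | lra]). lra.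
Qed.

(* Completing the square: b^2 t + r^2/(c^2 t) = 2 (b/c) r + b^2 (t - t0)^2 / t
   with t0 = r/(bc), the point where the Gaussian factor peaks. *)
Lemma weight_exp (a b c r t : R) : 0 < b -> 0 < c -> 0 < t ->
  weight a b c r t =
    exp (- a * ln t - 2 * b / c * r - b ^ 2 * (t - r / (b * c)) ^ 2 / t).
Proof.
intros hb hc ht. unfold weight, Rpower. rewrite <- !exp_plus. f_equal.
field. repeat split; lra.
Qed.

Section RegularProfile.

Variable f : R -> R.
Hypothesis hf_pos : forall t, 0 < t -> 0 < f t.
Hypothesis hf_noninc : forall s t, 0 < s -> s <= t -> f t <= f s.
Hypothesis ht2f : forall s t, 0 < s -> s <= t -> s ^ 2 * f s <= t ^ 2 * f t.

(* Near t > 0 the two monotonicity conditions squeeze f: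
   f u <= f s <= (u/s)^2 f u, so f is locally Lipschitz. *)
Lemma f_increment_bound (t s u : R) : 0 < t -> t / 2 <= s -> s <= u -> u <= 3 * t / 2 ->
  0 <= f s - f u <= 12 * f (t / 2) / t * (u - s).
Proof.
intros ht hs hsu hu.
assert (Hu : f u <= f (t / 2)) by (apply hf_noninc; lra).
assert (Hfu : 0 < f u) by (apply hf_pos; lra).
assert (Hsq := ht2f s u ltac:(lra) hsu).
split; [assert (f u <= f s) by (apply hf_noninc; lra); lra |].
assert (Hkey : t ^ 2 / 4 * (f s - f u) <= 3 * t * f (t / 2) * (u - s)).
{ assert (f u <= f s) by (apply hf_noninc; lra).
  assert (s ^ 2 * (f s - f u) <= (u - s) * (u + s) * f u) by nra.
  assert ((u - s) * (u + s) * f u <= (u - s) * (3 * t) * f (t / 2)).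
  { apply Rmult_le_compat; nra. }
  assert (t ^ 2 / 4 <= s ^ 2) by nra.
  assert (t ^ 2 / 4 * (f s - f u) <= s ^ 2 * (f s - f u))
    by (apply Rmult_le_compat_r; lra).
  lra. }
apply Rmult_le_reg_l with (t ^ 2 / 4); [nra |].
replace (t ^ 2 / 4 * (12 * f (t / 2) / t * (u - s))) with (3 * t * f (t / 2) * (u - s))
  by (field; lra).
exact Hkey.
Qed.

Lemma f_continuous (t : R) : 0 < t -> continuity_pt f t.
Proof.
intros ht eps heps.
set (L := 12 * f (t / 2) / t).
assert (HL : 0 < L) by (apply Rdiv_lt_0_compat; [assert (0 < f (t / 2)) by (apply hf_pos; lra) |]; lra).
exists (Rmin (t / 2) (eps / L)).
split; [apply Rmin_pos; [lra | apply Rdiv_lt_0_compat; lra] |].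
intros x [_ Hx]. simpl in *. unfold R_dist in *.
assert (Hx1 := Rlt_le_trans _ _ _ Hx (Rmin_l _ _)).
assert (Hx2 := Rlt_le_trans _ _ _ Hx (Rmin_r _ _)).
assert (Hlip : Rabs (f x - f t) <= L * Rabs (x - t)).
{ destruct (Rle_dec x t) as [Hxt | Hxt].
  - rewrite (Rabs_left1 (x - t)) in * by lra.
    destruct (f_increment_bound t x t ht ltac:(lra) Hxt ltac:(lra)).
    rewrite Rabs_pos_eq by lra. unfold L. lra.
  - rewrite (Rabs_pos_eq (x - t)) in * by lra.
    destruct (f_increment_bound t t x ht ltac:(lra) ltac:(lra) ltac:(lra)).
    rewrite Rabs_left1 by lra. unfold L. lra. }
apply Rle_lt_trans with (1 := Hlip).
apply Rmult_lt_reg_r with (/ L); [apply Rinv_0_lt_compat; lra |].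
replace (L * Rabs (x - t) * / L) with (Rabs (x - t)) by (field; lra).
exact Hx2.
Qed.

Lemma f_ratio_bound (s u : R) : 0 < s -> s <= u -> f s <= exp (2 * (ln u - ln s)) * f u.
Proof.
intros hs hsu.
replace (exp (2 * (ln u - ln s))) with (u ^ 2 / s ^ 2).
2: { replace (2 * (ln u - ln s)) with ((ln u - ln s) + (ln u - ln s)) by ring.
     unfold Rminus. rewrite !exp_plus, !exp_Ropp, !exp_ln by lra. field. lra. }
assert (H2 := ht2f s u hs hsu).
apply Rmult_le_reg_r with (s ^ 2); [nra |].
replace (u ^ 2 / s ^ 2 * f u * s ^ 2) with (u ^ 2 * f u) by (field; lra). lra.
Qed.

Lemma integrand_integrable (a b c r u v : R) :
  0 < c -> 0 < u -> u <= v -> Riemann_integrable (integrand f a b c r) u v.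
Proof.
intros hc hu huv.
apply continuity_implies_RiemannInt; [exact huv |]. intros t Ht.
apply (continuity_pt_mult (weight a b c r) f).
- apply weight_continuous; lra.
- apply f_continuous. lra.
Qed.

End RegularProfile.

(* Three elementary inequalities showing that the Gaussian exponent
   b^2 (t - t0)^2 / t, with t0 = q^2, dominates a linear decay at rate mu/q
   (right and left of t0) and a logarithmic singularity (left of t0). *)

(* Right of the peak: t = q^2 + s with s >= 0. *)
Lemma gauss_dominates_linear_right (b q s mu sm : R) :
  0 < b -> 0 < q -> 0 <= s -> 0 < mu -> mu <= b ->
  0 < sm -> sm <= q -> mu <= b ^ 2 * sm / 2 ->
  mu / q * s - 1 / 2 <= b ^ 2 * s ^ 2 / (q ^ 2 + s).
Proof.
intros hb hq hs hmu hmub hsm hsmq hmu2.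
assert (Hlin : mu / q * s <= b * s / q).
{ unfold Rdiv. replace (mu * / q * s) with (mu * s * / q) by ring.
  apply Rmult_le_compat_r; [left; apply Rinv_0_lt_compat |]; nra. }
destruct (Rle_dec s (q ^ 2)) as [Hs | Hs].
- set (y := b * s / q).
  assert (Hy : y ^ 2 / 2 <= b ^ 2 * s ^ 2 / (q ^ 2 + s)).
  { unfold y, Rdiv.
    replace ((b * s * / q) ^ 2 * / 2) with (b ^ 2 * s ^ 2 * / (2 * q ^ 2)) by (field; lra).
    apply Rmult_le_compat_l; [nra |]. apply Rinv_le_contravar; [nra | lra]. }
  assert (y - 1 / 2 <= y ^ 2 / 2) by (assert (0 <= (y - 1) ^ 2) by apply pow2_ge_0; nra).
  unfold y in *. lra.
- assert (Hy : b ^ 2 * s / 2 <= b ^ 2 * s ^ 2 / (q ^ 2 + s)).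
  { unfold Rdiv.
    replace (b ^ 2 * s * / 2) with (b ^ 2 * s ^ 2 * / (2 * s)) by (field; nra).
    apply Rmult_le_compat_l; [nra |]. apply Rinv_le_contravar; [nra | lra]. }
  assert (mu / q <= b ^ 2 / 2).
  { apply Rmult_le_reg_r with q; [lra |]. unfold Rdiv.
    rewrite Rmult_assoc, Rinv_l by lra. nra. }
  nra.
Qed.

(* Left of the peak: 0 < t <= q^2, with s = q^2 - t. *)
Lemma gauss_dominates_linear_left (b q t s mu : R) :
  0 < b -> 0 < q -> 0 < t -> t <= q ^ 2 -> 0 <= s -> 0 < mu -> mu <= b ->
  mu / q * s - 1 / 2 <= (b ^ 2 * s ^ 2 / t) / 2.
Proof.
intros hb hq ht htq hs hmu hmub.
assert (Hlin : mu / q * s <= b * s / q).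
{ unfold Rdiv. replace (mu * / q * s) with (mu * s * / q) by ring.
  apply Rmult_le_compat_r; [left; apply Rinv_0_lt_compat |]; nra. }
set (y := b * s / q).
assert (Hy : y ^ 2 <= b ^ 2 * s ^ 2 / t).
{ unfold y, Rdiv.
  replace ((b * s * / q) ^ 2) with (b ^ 2 * s ^ 2 * / q ^ 2) by (field; lra).
  apply Rmult_le_compat_l; [nra |]. apply Rinv_le_contravar; [nra | lra]. }
assert (y - 1 / 2 <= y ^ 2 / 2) by (assert (0 <= (y - 1) ^ 2) by apply pow2_ge_0; nra).
unfold y in *. lra.
Qed.

(* Left of the peak the factor (t0/t)^m is absorbed by half the Gaussian
   exponent, at the cost of a constant depending on m and on any beta with
   2 beta <= b^2 t0 (tangent line of beta e^L at L = ln (m/beta)). *)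
Lemma gauss_dominates_log (b t t0 beta m : R) :
  0 < b -> 0 < t -> t < t0 -> 0 < beta -> 2 * beta <= b ^ 2 * t0 -> 0 < m ->
  m * (ln t0 - ln t) <= (b ^ 2 * (t0 - t) ^ 2 / t) / 2 + 2 * beta + m * Rabs (ln (m / beta)).
Proof.
intros hb ht htt0 hbeta hbt0 hm.
set (L := ln t0 - ln t).
assert (HL : exp L = t0 / t).
{ unfold L, Rminus. rewrite exp_plus, exp_Ropp, !exp_ln by lra. reflexivity. }
set (L0 := ln (m / beta)).
assert (HL0 : exp L0 = m / beta)
  by (unfold L0; rewrite exp_ln; [reflexivity | apply Rdiv_lt_0_compat; lra]).
assert (Htangent : m * (1 + L - L0) <= beta * exp L).
{ replace L with (L0 + (L - L0)) at 2 by ring. rewrite exp_plus, HL0.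
  replace (beta * (m / beta * exp (L - L0))) with (m * exp (L - L0)) by (field; lra).
  apply Rmult_le_compat_l; [lra |]. assert (H1 := exp_ineq1_le (L - L0)). lra. }
assert (Hgauss : beta * (t0 / t) - 2 * beta <= (b ^ 2 * (t0 - t) ^ 2 / t) / 2).
{ replace (beta * (t0 / t) - 2 * beta) with ((2 * beta) * (t0 - 2 * t) / (2 * t))
    by (field; lra).
  replace (b ^ 2 * (t0 - t) ^ 2 / t / 2) with (b ^ 2 * (t0 - t) ^ 2 / (2 * t))
    by (field; lra).
  unfold Rdiv. apply Rmult_le_compat_r; [left; apply Rinv_0_lt_compat; lra |].
  assert (0 <= b ^ 2 * (t0 - t) ^ 2) by (apply Rmult_le_pos; apply pow2_ge_0).
  destruct (Rle_dec 0 (t0 - 2 * t)) as [Hpos | Hneg]; [| nra].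
  assert (2 * beta * (t0 - 2 * t) <= b ^ 2 * t0 * (t0 - 2 * t))
    by (apply Rmult_le_compat_r; lra).
  assert (t0 * (t0 - 2 * t) <= (t0 - t) ^ 2) by nra.
  nra. }
rewrite <- HL in Hgauss.
assert (m * L0 <= m * Rabs L0) by (apply Rmult_le_compat_l; [lra | apply Rle_abs]).
fold L0. lra.
Qed.

Section IntegralBounds.

Variables (f : R -> R) (a b c : R).
Hypothesis hf_pos : forall t, 0 < t -> 0 < f t.
Hypothesis hf_noninc : forall s t, 0 < s -> s <= t -> f t <= f s.
Hypothesis ha : 0 <= a.
Hypothesis hb : 0 < b.
Hypothesis hc : 0 < c.
Hypothesis ht2f : forall s t, 0 < s -> s <= t -> s ^ 2 * f s <= t ^ 2 * f t.

(* For r >= 1 the Gaussian factor peaks at t0 = r/(bc), which has width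
   ~ sqrt t0; the constants below do not depend on r. *)
Definition peak_time (r : R) : R := r / (b * c).
Definition t_min : R := peak_time 1.
Definition decay_rate : R := Rmin b (b ^ 2 * sqrt t_min / 2).
Definition window : R := Rmin (sqrt t_min) (/ b).
Definition beta : R := b ^ 2 * t_min / 2.
Definition log_const : R := 1 / 2 + 2 * beta + (a + 2) * Rabs (ln ((a + 2) / beta)).

Definition peak_value (r : R) : R :=
  Rpower (peak_time r) (- a) * sqrt (peak_time r) * f (peak_time r) * exp (- (2 * b / c * r)).

Lemma peak_time_pos (r : R) : 0 < r -> 0 < peak_time r.
Proof. intros hr. unfold peak_time. apply Rdiv_lt_0_compat; nra. Qed.

Lemma t_min_le (r : R) : 1 <= r -> t_min <= peak_time r.
Proof.
intros hr. unfold t_min, peak_time, Rdiv.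
apply Rmult_le_compat_r; [left; apply Rinv_0_lt_compat; nra | exact hr].
Qed.

Lemma sqrt_t_min_pos : 0 < sqrt t_min.
Proof. apply sqrt_lt_R0, peak_time_pos; lra. Qed.

Lemma decay_rate_pos : 0 < decay_rate.
Proof.
assert (H := sqrt_t_min_pos). apply Rmin_pos; [exact hb |].
apply Rdiv_lt_0_compat; [apply Rmult_lt_0_compat; [apply pow_lt |] |]; lra.
Qed.

Lemma window_pos : 0 < window.
Proof. apply Rmin_pos; [exact sqrt_t_min_pos | apply Rinv_0_lt_compat, hb]. Qed.

Lemma beta_pos : 0 < beta.
Proof.
unfold beta. assert (0 < t_min) by (apply peak_time_pos; lra).
apply Rdiv_lt_0_compat; [apply Rmult_lt_0_compat; [apply pow_lt |] |]; lra.
Qed.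

Lemma log_const_ge_half : 1 / 2 <= log_const.
Proof.
unfold log_const. assert (H := beta_pos).
assert (0 <= (a + 2) * Rabs (ln ((a + 2) / beta))) by (apply Rmult_le_pos; [lra | apply Rabs_pos]).
lra.
Qed.

Lemma integrand_upper (r t : R) : 1 <= r -> 0 < t ->
  integrand f a b c r t <=
    f (peak_time r) * exp (- a * ln (peak_time r) - 2 * b / c * r + log_const)
    * exp (- (decay_rate / sqrt (peak_time r)) * Rabs (t - peak_time r)).
Proof.
intros hr ht.
assert (ht0 := peak_time_pos r ltac:(lra)).
assert (htm := t_min_le r hr).
assert (hsm := sqrt_t_min_pos).
assert (hmu := decay_rate_pos).
assert (hbeta := beta_pos).
assert (hLc := log_const_ge_half).
set (t0 := peak_time r) in *. set (q := sqrt t0).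
assert (hq : 0 < q) by (apply sqrt_lt_R0; lra).
assert (hq2 : q ^ 2 = t0) by (apply pow2_sqrt; lra).
assert (hsmq : sqrt t_min <= q) by (apply sqrt_le_1_alt; exact htm).
rewrite integrand_weight, weight_exp by assumption. fold (peak_time r) t0.
rewrite (Rmult_comm (exp _) (f t)), Rmult_assoc, <- exp_plus.
assert (hft : 0 < f t) by (apply hf_pos; exact ht).
destruct (Rle_dec t0 t) as [Hle | Hlt].
- assert (Hf : f t <= f t0) by (apply hf_noninc; lra).
  rewrite Rabs_pos_eq by lra.
  apply Rmult_le_compat; [lra | left; apply exp_pos | exact Hf |].
  apply exp_le_compat.
  assert (a * ln t0 <= a * ln t) by (apply Rmult_le_compat_l; [exact ha | apply ln_le; lra]).
  assert (Hgauss := gauss_dominates_linear_right b q (t - t0) decay_rate (sqrt t_min)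
            hb hq ltac:(lra) hmu (Rmin_l _ _) hsm hsmq (Rmin_r _ _)).
  replace (q ^ 2 + (t - t0)) with t in Hgauss by (rewrite hq2; ring).
  unfold Rdiv in *. lra.
- assert (Hf := f_ratio_bound f ht2f t t0 ht ltac:(lra)).
  rewrite Rabs_left by lra.
  eapply Rle_trans; [apply Rmult_le_compat_r; [left; apply exp_pos | exact Hf] |].
  rewrite (Rmult_comm (exp _) (f t0)), Rmult_assoc, <- exp_plus.
  apply Rmult_le_compat_l; [left; apply hf_pos; lra |]. apply exp_le_compat.
  assert (Hlin := gauss_dominates_linear_left b q t (t0 - t) decay_rate hb hq ht
            ltac:(lra) ltac:(lra) hmu (Rmin_l _ _)).
  assert (Hlog := gauss_dominates_log b t t0 beta (a + 2) hb ht ltac:(lra) hbeta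
            ltac:(unfold beta; nra) ltac:(lra)).
  replace ((t - t0) ^ 2) with ((t0 - t) ^ 2) by ring.
  unfold log_const, Rdiv in *. lra.
Qed.

(* Pointwise lower bound on the window [t0, t0 + window * sqrt t0], where
   t ~ t0, f(t) >= f(2 t0) >= f(t0)/4 and the Gaussian exponent is at most 1. *)
Lemma integrand_lower (r t : R) : 1 <= r ->
  peak_time r <= t <= peak_time r + window * sqrt (peak_time r) ->
  exp (- a * ln 2 - a * ln (peak_time r) - 2 * b / c * r - 1) * (f (peak_time r) / 4)
    <= integrand f a b c r t.
Proof.
intros hr ht.
assert (ht0 := peak_time_pos r ltac:(lra)).
assert (htm := t_min_le r hr).
assert (hkap := window_pos).
set (t0 := peak_time r) in *. set (q := sqrt t0) in *.
assert (hq : 0 < q) by (apply sqrt_lt_R0; lra).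
assert (hq2 : q ^ 2 = t0) by (apply pow2_sqrt; lra).
assert (hkapq : window <= q)
  by (apply Rle_trans with (sqrt t_min); [apply Rmin_l | apply sqrt_le_1_alt; exact htm]).
assert (hkapb : b * window <= 1).
{ apply Rle_trans with (b * / b); [apply Rmult_le_compat_l; [lra | apply Rmin_r] |].
  rewrite Rinv_r by lra. lra. }
assert (Hw : window * q <= t0) by (rewrite <- hq2; nra).
rewrite integrand_weight, weight_exp by lra. fold (peak_time r) t0.
assert (Hf : f t0 / 4 <= f t).
{ assert (H := ht2f t0 (2 * t0) ht0 ltac:(lra)).
  assert (Hdouble : f t0 / 4 <= f (2 * t0)) by (assert (0 < t0 ^ 2) by nra; nra).
  apply Rle_trans with (1 := Hdouble). apply hf_noninc; lra. }
apply Rmult_le_compat; [left; apply exp_pos | assert (0 < f t0) by auto; lra | | exact Hf].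
apply exp_le_compat.
assert (a * ln t <= a * ln 2 + a * ln t0).
{ rewrite <- Rmult_plus_distr_l, <- ln_mult by lra.
  apply Rmult_le_compat_l; [exact ha | apply ln_le; lra]. }
assert (b ^ 2 * (t - t0) ^ 2 / t <= 1).
{ assert (b * (t - t0) <= q) by nra.
  assert (0 <= b * (t - t0)) by nra.
  assert ((b * (t - t0)) ^ 2 <= q ^ 2) by (apply pow_incr; lra).
  assert (b ^ 2 * (t - t0) ^ 2 <= t) by (rewrite Rpow_mult_distr in *; lra).
  apply Rmult_le_reg_r with t; [lra |]. unfold Rdiv.
  rewrite Rmult_assoc, Rinv_l by lra. lra. }
lra.
Qed.

Definition lower_const : R := window * exp (- a * ln 2 - 1) / 4.
Definition upper_const : R := exp log_const * PI / decay_rate.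

Lemma lower_const_pos : 0 < lower_const.
Proof.
unfold lower_const. assert (H := window_pos). assert (0 < exp (- a * ln 2 - 1)) by apply exp_pos.
apply Rdiv_lt_0_compat; [apply Rmult_lt_0_compat |]; lra.
Qed.

Lemma upper_const_pos : 0 < upper_const.
Proof.
unfold upper_const. assert (H := decay_rate_pos). assert (0 < exp log_const) by apply exp_pos.
assert (0 < PI) by apply PI_RGT_0.
apply Rdiv_lt_0_compat; [apply Rmult_lt_0_compat |]; lra.
Qed.

Lemma integrand_nonneg (r t : R) : 0 < t -> 0 <= integrand f a b c r t.
Proof.
intros ht. rewrite integrand_weight.
apply Rmult_le_pos; left; [apply weight_pos | apply hf_pos]; exact ht.
Qed.

Lemma RInt_integrand_upper (r u v : R) : 1 <= r -> 0 < u -> u <= v ->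
  RInt (integrand f a b c r) u v <= upper_const * peak_value r.
Proof.
intros hr hu huv.
assert (ht0 := peak_time_pos r ltac:(lra)). assert (hmu := decay_rate_pos).
set (t0 := peak_time r) in *. set (q := sqrt t0).
assert (hq : 0 < q) by (apply sqrt_lt_R0; lra).
set (A := f t0 * exp (- a * ln t0 - 2 * b / c * r + log_const)).
assert (hA : 0 <= A) by (left; apply Rmult_lt_0_compat; [apply hf_pos; lra | apply exp_pos]).
replace (upper_const * peak_value r) with (A * PI / (decay_rate / q)).
- apply (RInt_le_two_sided_exp _ A (decay_rate / q) t0); try lra.
  + apply Rdiv_lt_0_compat; lra.
  + apply ex_RInt_Reals_1, (integrand_integrable f hf_pos hf_noninc ht2f); lra.
  + intros t Ht. apply integrand_upper; lra.
- unfold A, upper_const, peak_value, Rpower. fold t0 q.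
  replace (- a * ln t0 - 2 * b / c * r + log_const)
    with ((- a * ln t0) + (- (2 * b / c * r)) + log_const) by ring.
  rewrite !exp_plus. field. split; lra.
Qed.

Lemma RInt_integrand_window (r : R) : 1 <= r ->
  lower_const * peak_value r <=
    RInt (integrand f a b c r) (peak_time r) (peak_time r + window * sqrt (peak_time r)).
Proof.
intros hr.
assert (ht0 := peak_time_pos r ltac:(lra)). assert (hkap := window_pos).
set (t0 := peak_time r) in *. set (q := sqrt t0).
assert (hq : 0 < q) by (apply sqrt_lt_R0; lra).
assert (hw : 0 < window * q) by (apply Rmult_lt_0_compat; lra).
set (L0 := exp (- a * ln 2 - a * ln t0 - 2 * b / c * r - 1) * (f t0 / 4)).
replace (lower_const * peak_value r) with (RInt (fun _ => L0) t0 (t0 + window * q)).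
- apply RInt_le; [lra | apply ex_RInt_const | apply ex_RInt_Reals_1, (integrand_integrable f hf_pos hf_noninc ht2f); lra |].
  intros t Ht. apply integrand_lower; [exact hr | unfold q, t0 in *; lra].
- rewrite RInt_const. unfold scal; simpl; unfold mult; simpl.
  unfold L0, lower_const, peak_value, Rpower. fold t0 q.
  replace (- a * ln 2 - a * ln t0 - 2 * b / c * r - 1)
    with ((- a * ln 2 - 1) + (- a * ln t0) + (- (2 * b / c * r))) by ring.
  rewrite !exp_plus. field.
Qed.

Lemma integral_bounds (r : R) : 1 <= r ->
  exists F, improper_int_0_inf (integrand f a b c r) F /\
    lower_const * peak_value r <= F /\ F <= upper_const * peak_value r.
Proof.
intros hr.
destruct (improper_int_of_bounded (integrand f a b c r) (upper_const * peak_value r))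
  as (F & HF & HFup & HFsup).
- intros u v hu huv. apply (integrand_integrable f hf_pos hf_noninc ht2f); lra.
- intros t ht. apply integrand_nonneg, ht.
- intros u v hu huv. apply RInt_integrand_upper; assumption.
- exists F. split; [exact HF | split; [| exact HFup]].
  assert (ht0 := peak_time_pos r ltac:(lra)).
  assert (0 < window * sqrt (peak_time r))
    by (apply Rmult_lt_0_compat; [apply window_pos | apply sqrt_lt_R0, ht0]).
  eapply Rle_trans; [apply RInt_integrand_window, hr |]. apply HFsup; lra.
Qed.

Lemma comparison_peak_value (r : R) : 0 < r ->
  comparison f a b c r = Rpower (b * c) (1 / 2 - a) * peak_value r.
Proof.
intros hr. assert (ht0 := peak_time_pos r hr).
unfold comparison, peak_value. fold (peak_time r).
rewrite <- Rpower_sqrt by exact ht0.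
replace r with (peak_time r * (b * c)) at 1 by (unfold peak_time; field; lra).
rewrite <- Rpower_mult_distr by nra.
replace (- a + 1 / 2) with (- a + / 2) by field.
replace (1 / 2 - a) with (- a + / 2) by field.
rewrite Rpower_plus. ring.
Qed.

End IntegralBounds.

Theorem lemmaA1 (f : R -> R) (a b c : R)
  (hf_pos : forall t, 0 < t -> 0 < f t)
  (hf_noninc : forall s t, 0 < s -> s <= t -> f t <= f s)
  (ha : 0 <= a) (hb : 0 < b) (hc : 0 < c)
  (ht2f : forall s t, 0 < s -> s <= t -> s ^ 2 * f s <= t ^ 2 * f t) :
  exists C1 C2 : R, 0 < C1 /\ 0 < C2 /\
    forall r : R, 1 <= r ->
      exists F : R, improper_int_0_inf (integrand f a b c r) F /\
        C1 * comparison f a b c r <= F /\ F <= C2 * comparison f a b c r.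
Proof.
set (D := Rpower (b * c) (1 / 2 - a)).
assert (hD : 0 < D) by apply exp_pos.
assert (hlo := lower_const_pos a b c hb).
assert (hup := upper_const_pos a b c hb).
exists (lower_const a b c / D), (upper_const a b c / D).
split; [apply Rdiv_lt_0_compat; lra | split; [apply Rdiv_lt_0_compat; lra |]].
intros r hr.
destruct (integral_bounds f a b c hf_pos hf_noninc ha hb hc ht2f r hr) as (F & HF & Hlo & Hup).
exists F. rewrite (comparison_peak_value f a b c hb hc r ltac:(lra)). fold D.
split; [exact HF |].
replace (lower_const a b c / D * (D * peak_value f a b c r))
  with (lower_const a b c * peak_value f a b c r) by (field; lra).
replace (upper_const a b c / D * (D * peak_value f a b c r))
  with (upper_const a b c * peak_value f a b c r) by (field; lra).
split; assumption.
Qed.
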